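(* Let $\mathbf{L}=\langle L,\leq,0,1\rangle$ be a totally ordered complete lattice and let $\mathcal{D}_1,\mathcal{D}_2$ be ranked data tables on the same relation scheme $R$. Then $\mathcal{D}_1 \sqsubseteq \mathcal{D}_2$ if and only if for every $r \in \mathrm{Tupl}(R)$ we have $\mathcal{L}(\mathcal{D}_1,r) \subseteq \mathcal{L}(\mathcal{D}_2,r)$.
   Context: A relation scheme $R$ is a finite set of attributes, each attribute having a (at most countable) set of admissible values; a tuple on $R$ is a map assigning to each attribute $y\in R$ an admissible value, and $\mathrm{Tupl}(R)$ denotes the set of all tuples on $R$. A ranked data table (RDT) on $R$ is a map $\mathcal{D}\colon \mathrm{Tupl}(R)\to L$ such that $\{r \in \mathrm{Tupl}(R);\ \mathcal{D}(r)>0\}$ is finite. For an RDT $\mathcal{D}$ on $R$ and $r\in\mathrm{Tupl}(R)$ put $\mathcal{U}(\mathcal{D},r)=\{r'\in\mathrm{Tupl}(R);\ \mathcal{D}(r')\geq \mathcal{D}(r)\}$ and $\mathcal{L}(\mathcal{D},r)=\{r'\in\mathrm{Tupl}(R);\ \mathcal{D}(r')\leq \mathcal{D}(r)\}$. $\mathcal{D}_1$ is ordinally included in $\mathcal{D}_2$, written $\mathcal{D}_1\sqsubseteq\mathcal{D}_2$, if $\mathcal{U}(\mathcal{D}_1,r)\subseteq\mathcal{U}(\mathcal{D}_2,r)$ for all $r\in\mathrm{Tupl}(R)$. *)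

From Stdlib Require List.
From mathcomp Require Import all_boot all_order.
Set Implicit Arguments. Unset Strict Implicit. Unset Printing Implicit Defensive.
Import Order.TTheory.
Local Open Scope order_scope.

Definition complete_lattice {d} (L : porderType d) : Prop :=
  forall P : L -> Prop, exists s : L,
    (forall x, P x -> x <= s) /\ (forall u, (forall x, P x -> x <= u) -> s <= u).

(* A relation scheme: a finite type Y of attributes, each with an (at most
   countable) domain dom y. A tuple assigns to each attribute an admissible value. *)
Definition Tupl (Y : finType) (dom : Y -> countType) : Type := forall y : Y, dom y.

Definition is_RDT {d} {L : tbOrderType d} {Y : finType} {dom : Y -> countType}
  (D : Tupl dom -> L) : Prop :=
  exists s : list (Tupl dom), forall r, \bot < D r -> List.In r s.

Definition Uset {d} {L : tbOrderType d} {Y : finType} {dom : Y -> countType}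
  (D : Tupl dom -> L) (r : Tupl dom) : Tupl dom -> Prop :=
  fun r' => D r <= D r'.

Definition Lset {d} {L : tbOrderType d} {Y : finType} {dom : Y -> countType}
  (D : Tupl dom -> L) (r : Tupl dom) : Tupl dom -> Prop :=
  fun r' => D r' <= D r.

Definition set_incl {T : Type} (A B : T -> Prop) : Prop := forall x, A x -> B x.

Definition ord_incl {d} {L : tbOrderType d} {Y : finType} {dom : Y -> countType}
  (D1 D2 : Tupl dom -> L) : Prop :=
  forall r, set_incl (Uset D1 r) (Uset D2 r).

From mathcomp Require Import all_boot all_order.

(* [r'] lies in the upper set of [r] exactly when [r] lies in the lower set of
   [r'], so either family of inclusions is the other one with [r] and [r']
   swapped. *)

Lemma Uset_Lset {d} {L : tbOrderType d} {Y : finType} {dom : Y -> countType}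
    (D : Tupl dom -> L) (r r' : Tupl dom) :
  Uset D r r' <-> Lset D r' r.
Proof. by []. Qed.

Lemma ord_incl_Lset {d} {L : tbOrderType d} {Y : finType} {dom : Y -> countType}
    (D1 D2 : Tupl dom -> L) :
  ord_incl D1 D2 <-> (forall r, set_incl (Lset D1 r) (Lset D2 r)).
Proof.
split=> incl r r' /Uset_Lset r_r'; apply/Uset_Lset; exact: incl.
Qed.

Theorem theorem2 (d : Order.disp_t) (L : tbOrderType d) (HL : complete_lattice L)
  (Y : finType) (dom : Y -> countType) (D1 D2 : Tupl dom -> L)
  (H1 : is_RDT D1) (H2 : is_RDT D2) :
  ord_incl D1 D2 <-> (forall r, set_incl (Lset D1 r) (Lset D2 r)).
Proof. exact: ord_incl_Lset. Qed.
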